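(* Every efficiently structured polyomino is crystallized.
   Context: A polyomino is a finite union of closed unit squares (tiles) of the square lattice, any two meeting (if at all) in a whole edge, whose interior is connected. Its holes are the bounded connected components of its complement in the plane; $h(A)$ is the number of holes and $|A|$ the number of tiles. The area of a hole is the number of unit squares needed to fill it. For $h\ge1$, $g(h)=\min\{|A|: h(A)=h\}$, and a polyomino with $h$ holes is crystallized if it has $g(h)$ tiles. The dual graph of $A$ has a vertex for each tile and an edge between two tiles sharing an edge; $A$ is acyclic if its dual graph is a tree. The perimeter of $A$ consists of the unit edges on its topological boundary; those bounding a hole form the hole perimeter, the others the outer perimeter, whose number of edges is $p_o(A)$. A polyomino with $n$ tiles and $h$ holes has minimal outer perimeter if $p_o(A)=2\lceil 2\sqrt{n+h}\,\rceil$. A polyomino is efficiently structured if it is acyclic, each of its holes has area one, and it has minimal outer perimeter. *)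

From HB Require Import structures.
From mathcomp Require Import all_boot all_order all_algebra.
From mathcomp Require Import finmap.
Set Implicit Arguments. Unset Strict Implicit. Unset Printing Implicit Defensive.
Import Order.TTheory GRing.Theory Num.Theory.
Local Open Scope fset_scope.

(* A cell (i,j) : int*int denotes the closed unit square [i,i+1]x[j,j+1]. *)
Definition cell := (int * int)%type.

Definition adj (c d : cell) : bool :=
  ((c.1 == d.1) && (absz (c.2 - d.2) == 1%N)) ||
  ((c.2 == d.2) && (absz (c.1 - d.1) == 1%N)).

Definition reach_in (P : cell -> Prop) (x y : cell) : Prop :=
  exists s : seq cell, [/\ path adj x s, last x s = y & forall z, z \in x :: s -> P z].

(* A polyomino is given by its finite nonempty set of tiles; its interior is
   connected iff its dual graph (edge-adjacency of tiles) is connected. *)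
Definition polyomino (A : {fset cell}) : Prop :=
  A != fset0 /\ forall x y, x \in A -> y \in A -> reach_in (fun z => z \in A) x y.

(* Connectivity in the complement of A (components of the plane minus A are
   the edge-connected classes of non-tile cells). *)
Definition creach (A : {fset cell}) (x y : cell) : Prop :=
  reach_in (fun z => z \notin A) x y.

(* A hole: a bounded (= finite) connected component of the complement. *)
Definition is_hole (A : {fset cell}) (H : {fset cell}) : Prop :=
  exists2 x, x \in H & x \notin A /\ forall y, creach A x y <-> y \in H.

Definition num_holes (A : {fset cell}) (k : nat) : Prop :=
  exists s : seq {fset cell},
    [/\ uniq s, forall H, H \in s <-> is_hole A H & size s = k].

Definition ntiles (A : {fset cell}) : nat := #|` A|.

Definition acyclic (A : {fset cell}) : Prop :=
  ~ exists s : seq cell,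
      [/\ (3 <= size s)%N, uniq s, all (fun z => z \in A) s & cycle adj s].

Definition outer_cell (A : {fset cell}) (d : cell) : Prop :=
  d \notin A /\
  ~ exists N : nat, forall y, creach A d y -> (absz y.1 <= N)%N /\ (absz y.2 <= N)%N.

(* A unit edge of the outer perimeter, encoded by the ordered pair (tile,
   outer non-tile cell) of the two cells it separates. *)
Definition outer_edge (A : {fset cell}) (e : cell * cell) : Prop :=
  [/\ e.1 \in A, adj e.1 e.2 & outer_cell A e.2].

Definition outer_perim (A : {fset cell}) (p : nat) : Prop :=
  exists E : {fset (cell * cell)}, (forall e, e \in E <-> outer_edge A e) /\ #|` E| = p.

(* ceil(2 * sqrt m) = least k with (2 sqrt m) <= k, i.e. 4m <= k^2;
   the search range 0..2m+1 suffices since (2m+1)^2 >= 4m. *)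
Definition ceil_2sqrt (m : nat) : nat :=
  find (fun k => (4 * m <= k * k)%N) (iota 0 (2 * m + 2)).

Definition min_outer_perim (A : {fset cell}) (h : nat) : Prop :=
  outer_perim A (2 * ceil_2sqrt (ntiles A + h)).

Definition efficiently_structured (A : {fset cell}) (h : nat) : Prop :=
  [/\ acyclic A, forall H, is_hole A H -> #|` H| = 1%N & min_outer_perim A h].

Definition crystallized (A : {fset cell}) (h : nat) : Prop :=
  forall B, polyomino B -> num_holes B h -> (ntiles A <= ntiles B)%N.

(* Count darts: ordered pairs (x, y) of edge-adjacent cells with x a tile; a set of n tiles
   has 4n of them.  For an efficiently structured A with h holes the dual graph is a tree, so
   at most 2|A| - 2 darts stay inside A, and every other dart crosses an outer edge or enters
   one of the h unit holes; hence |A| + 1 <= ceil(2 sqrt(|A| + h)) + 2h.  For any polyomino B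
   with h >= 1 holes, let F be B with its holes filled and nx x ny its bounding box.
   Connectivity keeps at least 2|B| - 2 darts inside B, every row and every column of the box
   sends two darts out of F, and every hole receives four, so nx + ny <= |B| - 2h + 1, while
   |B| + h <= |F| <= nx ny.  If F fills its box, the border of the box is a cycle of tiles and
   the bound on nx + ny improves by one.  As 4 nx ny <= (nx + ny)^2, this gives
   ceil(2 sqrt(|B| + h + 1)) + 2h <= |B| + 1, and since
   ceil(2 sqrt(j + t)) <= ceil(2 sqrt j) + t, the two bounds force |A| <= |B|. *)

From mathcomp Require Import all_boot all_order all_algebra finmap zify.
From Stdlib Require Import Classical ClassicalEpsilon.
Set Implicit Arguments. Unset Strict Implicit. Unset Printing Implicit Defensive.
Import Order.TTheory GRing.Theory Num.Theory.
Local Open Scope fset_scope.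
Local Open Scope nat_scope.

Lemma leq_size_count_key (T K : eqType) (s : seq T) (P : pred T) (key : T -> K) (X : seq K) :
  uniq X -> (forall k, k \in X -> exists2 p, p \in s & P p && (key p == k)) ->
  size X <= count P s.
Proof.
move=> uX HX; rewrite -size_filter -(size_map key).
apply: leq_trans (size_undup _); apply: uniq_leq_size => // k /HX [p ps /andP[Pp /eqP <-]].
by rewrite mem_undup map_f // mem_filter Pp.
Qed.

Lemma count_le_predU (T : eqType) (a b c : pred T) s :
  {in s, forall x, a x -> b x || c x} -> count a s <= count b s + count c s.
Proof.
move=> abc; rewrite -count_predUI (@eq_in_count _ a (predI a (predU b c))) => [|x xs].
  by rewrite (leq_trans (sub_count (a2 := predU b c) _ _)) ?leq_addr // => x /andP[].
by have := abc x xs; rewrite /= /predU /=; case: (a x) => // ->.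
Qed.

Lemma count_mem_fset (T : choiceType) (E : {fset T}) s : uniq s -> count [in E] s <= #|` E|.
Proof.
move=> us; rewrite -size_filter; apply: uniq_leq_size; first exact: filter_uniq.
by move=> x; rewrite mem_filter => /andP[].
Qed.

Lemma seq_argmax (T : eqType) (f : T -> int) x s :
  exists2 z, z \in x :: s & forall w, w \in x :: s -> (f w <= f z)%R.
Proof.
elim: s x => [|y s IH] x; first by exists x => [|w]; rewrite ?mem_head // inE => /eqP ->.
have [z zs zmax] := IH y; have [fxz|fzx] := lerP (f x) (f z).
  by exists z => [|w]; rewrite inE ?zs ?orbT // => /predU1P[->|/zmax].
exists x => [|w]; rewrite ?mem_head // inE => /predU1P[->|/zmax fwz] //.
exact: le_trans fwz (ltW fzx).
Qed.

Lemma fset_argmax (T : choiceType) (f : T -> int) (H : {fset T}) : H != fset0 ->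
  exists2 z, z \in H & forall w, w \in H -> (f w <= f z)%R.
Proof.
have memH w : (w \in H) = (w \in enum_fset H) by [].
case/fset0Pn => x; rewrite memH; case E: (enum_fset H) => [//|y s] _.
have [z zs zmax] := seq_argmax f y s.
by exists z => [|w]; rewrite memH E // => /zmax.
Qed.

Lemma in_fset_sep (T : choiceType) (A : {fset T}) (P : pred T) x :
  (x \in [fset y in A | P y]) = (x \in A) && P x.
Proof. by rewrite !inE. Qed.

Lemma cardfsU_disjoint (T : choiceType) (A B : {fset T}) :
  [disjoint A & B] -> #|` A `|` B| = #|` A| + #|` B|.
Proof. by rewrite -fsetI_eq0 cardfsU => /eqP ->; rewrite cardfs0 subn0. Qed.

Definition asbool (P : Prop) : bool := if excluded_middle_informative P then true else false.

Lemma asboolP (P : Prop) : reflect P (asbool P).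
Proof. by rewrite /asbool; case: excluded_middle_informative => ?; constructor. Qed.

Definition dirs : seq (int * int) := [:: (1, 0); (-1, 0); (0, 1); (0, -1)]%R.

Definition shift (z : cell) (d : int * int) : cell := (z.1 + d.1, z.2 + d.2)%R.

Definition nbrs (z : cell) : seq cell := [seq shift z d | d <- dirs].

Definition dot (d : int * int) (z : cell) : int := (d.1 * z.1 + d.2 * z.2)%R.

Lemma adjE x y : adj x y = (y \in nbrs x).
Proof.
case: x y => [a b] [c d]; rewrite /adj /nbrs /shift !inE /= !xpair_eqE.
by apply/idP/idP => /orP H; apply/orP; lia.
Qed.

Lemma adj_sym : symmetric adj.
Proof. by move=> x y; rewrite /adj; apply/idP/idP => /orP H; apply/orP; lia. Qed.

Lemma adj_irr : irreflexive adj.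
Proof. by move=> x; rewrite /adj; apply/negbTE/negP => /orP H; lia. Qed.

Lemma uniq_nbrs x : uniq (nbrs x).
Proof. by rewrite map_inj_uniq // => -[d1 d2] [e1 e2] /= [? ?]; congr pair; lia. Qed.

Lemma adj_shift z d : d \in dirs -> adj z (shift z d).
Proof. by move=> dD; rewrite adjE map_f. Qed.

Lemma dot_shift z d : d \in dirs -> dot d (shift z d) = (dot d z + 1)%R.
Proof. by case: z => a b; rewrite /dot /shift !inE => /or4P[]/eqP-> /=; lia. Qed.

Lemma shift_diff z d : ((shift z d).1 - z.1, (shift z d).2 - z.2)%R = d.
Proof. by case: z d => a b [c e]; rewrite /shift /=; congr pair; lia. Qed.

Lemma adj_fst_le a b : adj a b -> (b.1 <= a.1 + 1)%R.
Proof. by rewrite /adj => /orP H; lia. Qed.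

Lemma adj_snd_le a b : adj a b -> (b.2 <= a.2 + 1)%R.
Proof. by rewrite /adj => /orP H; lia. Qed.

(* The index of the line through z parallel to d. *)
Definition line (d : int * int) (z : cell) : int := if d.1 == 0%R then z.1 else z.2.

Lemma line_shift d z : d \in dirs -> line d (shift z d) = line d z.
Proof. by case: z => a b; rewrite /dirs /line /shift !inE => /or4P[]/eqP-> /=; lia. Qed.

Definition irange (lo : int) (n : nat) : seq int := [seq (lo + i%:Z)%R | i <- iota 0 n].

Lemma mem_irange lo n t : (t \in irange lo n) = (lo <= t < lo + n%:Z)%R.
Proof.
apply/mapP/idP => [[i] | /andP[lot tn]].
  by rewrite mem_iota => /andP[_ ?] ->; apply/andP; split; lia.
by exists (absz (t - lo)); [rewrite mem_iota /=; lia | lia].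
Qed.

Lemma uniq_irange lo n : uniq (irange lo n).
Proof. by rewrite map_inj_uniq ?iota_uniq // => i j; lia. Qed.

Definition box (x0 : int) (nx : nat) (y0 : int) (ny : nat) : seq cell :=
  [seq (a, b) | a <- irange x0 nx, b <- irange y0 ny].

Lemma mem_box x0 nx y0 ny z :
  (z \in box x0 nx y0 ny) = (z.1 \in irange x0 nx) && (z.2 \in irange y0 ny).
Proof.
case: z => a b; apply/allpairsP/andP => [[[a' b'] [? ? [-> ->]]] | [? ?]] //.
by exists (a, b).
Qed.

Lemma size_box x0 nx y0 ny : size (box x0 nx y0 ny) = nx * ny.
Proof. by rewrite size_allpairs !size_map !size_iota. Qed.

Lemma reach_refl P x : P x -> reach_in P x x.
Proof. by move=> Px; exists [::]; split => // z; rewrite inE => /eqP ->. Qed.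

Lemma reach_last P x y : reach_in P x y -> P y.
Proof. by case=> s [_ <- Ps]; apply: Ps; exact: mem_last. Qed.

Lemma reach_rcons P x y z : reach_in P x y -> adj y z -> P z -> reach_in P x z.
Proof.
case=> s [ps <- Ps] ayz Pz; exists (rcons s z); split.
- by rewrite rcons_path ps.
- by rewrite last_rcons.
- by move=> w; rewrite -rcons_cons mem_rcons inE => /predU1P[->|/Ps].
Qed.

Lemma reach_sym P x y : reach_in P x y -> reach_in P y x.
Proof.
case=> s [ps <- Ps]; exists (rev (belast x s)); split.
- by rewrite rev_path (eq_path (e' := adj)) // => u v /=; rewrite adj_sym.
- by case: s {ps Ps} => //= a s; rewrite rev_cons last_rcons.
- by move=> z zs; apply: Ps; rewrite lastI -mem_rev rev_rcons.
Qed.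

Lemma reach_trans P x y z : reach_in P x y -> reach_in P y z -> reach_in P x z.
Proof.
case=> s [ps ls Ps] [t [pt <- Pt]]; exists (s ++ t); split.
- by rewrite cat_path ps ls.
- by rewrite last_cat ls.
- move=> w; rewrite -cat_cons mem_cat => /orP[/Ps //|wt].
  by apply: Pt; rewrite inE wt orbT.
Qed.

Lemma reach_exit P (T : pred cell) x y : reach_in P x y -> T x -> ~~ T y ->
  exists u v, [/\ T u, ~~ T v, P v & adj u v].
Proof.
case=> s [+ <- Ps]; elim: s x Ps => [|z s IH] x Ps /=; first by move=> _ ->.
case/andP=> axz pzs Tx; have [Tz|nTz] := boolP (T z).
  by apply: IH => // w ws; apply: Ps; rewrite inE ws orbT.
by exists x, z; split => //; apply: Ps; rewrite !inE eqxx orbT.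
Qed.

Lemma path_ivt (f : cell -> int) x s t :
  (forall a b, adj a b -> (f b <= f a + 1)%R) -> path adj x s ->
  (f x <= t <= f (last x s))%R -> exists2 z, z \in x :: s & f z = t.
Proof.
move=> Lf; elim: s x => [|y s IH] x /=.
  move=> _ /andP[xt tx]; exists x; rewrite ?mem_head //.
  by apply/eqP; rewrite eq_le xt tx.
case/andP=> axy ps /andP[fxt tl].
have [<-|fxt'] := eqVneq (f x) t; first by exists x; rewrite ?mem_head.
have [z zs <-] : exists2 z, z \in y :: s & f z = t.
  by apply: IH => //; have := Lf _ _ axy; rewrite tl andbT; move: fxt fxt'; lia.
by exists z; rewrite // inE zs orbT.
Qed.

Lemma polyomino_ivt S (f : cell -> int) a b t : polyomino S ->
  (forall x y, adj x y -> (f y <= f x + 1)%R) -> a \in S -> b \in S -> (f a <= t <= f b)%R ->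
  exists2 z, z \in S & f z = t.
Proof.
move=> [_ conn] Lf aS bS; have [s [ps <- Ss]] := conn a b aS bS.
by case/(path_ivt Lf ps) => z /Ss zS <-; exists z.
Qed.

(** * Darts *)

(* [ndarts S [in S]] counts every edge of the dual graph of S twice. *)
Definition darts (S : {fset cell}) : seq (cell * cell) :=
  [seq (x, y) | x <- enum_fset S, y <- nbrs x].

Definition ndarts (S : {fset cell}) (P : pred cell) : nat := count (fun p => P p.2) (darts S).

Definition deg (S : {fset cell}) (x : cell) : nat := count [in S] (nbrs x).

Lemma mem_darts S p : (p \in darts S) = (p.1 \in S) && adj p.1 p.2.
Proof.
case: p => x y; rewrite adjE; apply/allpairsPdep/andP => [[x' [y' [? ? [-> ->]]]]|[? ?]] //.
by exists x, y.
Qed.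

Lemma uniq_darts S : uniq (darts S).
Proof.
apply: allpairs_uniq_dep => [||[x1 y1] [x2 y2] _ _ /= [<- ->] //]; first exact: fset_uniq.
by move=> x _; exact: uniq_nbrs.
Qed.

Lemma size_darts S : size (darts S) = 4 * #|` S|.
Proof.
rewrite size_allpairs_dep; change #|` S| with (size (enum_fset S)).
by elim: (enum_fset S) => //= x s ->; lia.
Qed.

Lemma ndartsE S P : ndarts S P = \sum_(x <- S) count P (nbrs x).
Proof.
rewrite /ndarts /darts count_flatten sumnE !big_map.
by apply: eq_bigr => x _; rewrite count_map.
Qed.

Lemma ndarts_fsetU1 v S P : v \notin S -> ndarts (v |` S) P = count P (nbrs v) + ndarts S P.
Proof. by move=> vS; rewrite !ndartsE big_fsetU1. Qed.

Lemma ndarts_fset1 v P : ndarts [fset v] P = count P (nbrs v).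
Proof. by rewrite ndartsE big_seq_fset1. Qed.

Lemma ndarts_predC S P : ndarts S P + ndarts S (predC P) = 4 * #|` S|.
Proof. by rewrite -size_darts -(count_predC (fun p => P p.2)). Qed.

Lemma ndarts_fsetU S X Y : [disjoint X & Y] ->
  ndarts S [in X `|` Y] = ndarts S [in X] + ndarts S [in Y].
Proof.
move=> /fdisjointP dXY; rewrite /ndarts -count_predUI.
rewrite [count (predI _ _) _](eq_count (a2 := pred0)) ?count_pred0 ?addn0.
  by apply: eq_count => p /=; rewrite in_fsetU.
by move=> p /=; apply/negbTE/nandP; have [/dXY|] := boolP (p.2 \in X); [right | left].
Qed.

Lemma ndarts_sym S Y : ndarts S [in Y] = ndarts Y [in S].
Proof.
rewrite /ndarts -!size_filter -(size_map (fun p : cell * cell => (p.2, p.1))).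
apply/perm_size/uniq_perm.
- by rewrite map_inj_uniq ?filter_uniq ?uniq_darts // => -[? ?] [? ?] [-> ->].
- by rewrite filter_uniq ?uniq_darts.
case=> x y; rewrite mem_filter mem_darts /=; apply/mapP/idP => [[[a b]]|].
  by rewrite mem_filter mem_darts /= => /and3P[bY aS ab] [-> ->]; rewrite bY aS adj_sym.
by case/and3P=> xS yY yx; exists (y, x); rewrite // mem_filter mem_darts /= xS yY adj_sym.
Qed.

Lemma ndarts_le S Y : ndarts S [in Y] <= 4 * #|` Y|.
Proof. by rewrite ndarts_sym -size_darts count_size. Qed.

Lemma ndarts_in_fsetU1 v S : v \notin S ->
  ndarts (v |` S) [in v |` S] = ndarts S [in S] + (deg S v).*2.
Proof.
move=> vS; rewrite ndarts_fsetU1 // ndarts_fsetU ?fdisjoint1X // ndarts_sym ndarts_fset1.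
have -> : count [in v |` S] (nbrs v) = deg S v.
  apply: eq_in_count => z; rewrite /= in_fset1U -adjE; case: eqP => // ->.
  by rewrite adj_irr.
by rewrite -/(deg S v) -addnn addnA addnC.
Qed.

Lemma acyclic_sub A S : acyclic A -> S `<=` A -> acyclic S.
Proof.
move=> acA /fsubsetP SA [s [s3 us /allP sS cs]]; apply: acA.
by exists s; split => //; apply/allP => z /sS /SA.
Qed.

Lemma acyclic_path_nbr S v q w : acyclic S -> path adj v q -> uniq (v :: q) ->
  all [in S] (v :: q) -> w \in q -> adj v w -> w = head v q.
Proof.
move=> acS pq uq Sq wq; case/splitPr: wq pq uq Sq => [[//|u q1] q2].
rewrite -cat_rcons -!cat_cons cat_path cat_uniq all_cat.
move=> /andP[pc _] /andP[uc _] /andP[Sc _] avw.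
case: acS; exists (v :: rcons (u :: q1) w); split => //; first by rewrite /= size_rcons.
by rewrite /cycle rcons_path pc last_rcons adj_sym.
Qed.

Lemma acyclic_path_end S v q : acyclic S -> path adj v q -> uniq (v :: q) ->
  all [in S] (v :: q) -> (forall w, w \in S -> adj v w -> w \in v :: q) -> deg S v <= 1.
Proof.
move=> acS pq uq Sq ext; rewrite /deg -size_filter.
apply: (uniq_leq_size (s2 := [:: head v q])); first by rewrite filter_uniq ?uniq_nbrs.
move=> w; rewrite mem_filter -adjE => /andP[wS avw]; rewrite inE.
move: (ext w wS avw); rewrite inE => /predU1P[wv|wq]; first by rewrite wv adj_irr in avw.
by rewrite (acyclic_path_nbr acS pq uq Sq wq avw).
Qed.

(* The far end of a maximal simple path is a leaf. *)
Lemma acyclic_leaf S : acyclic S -> S != fset0 -> exists2 v, v \in S & deg S v <= 1.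
Proof.
move=> acS /fset0Pn [x xS].
suff: forall v q, path adj v q -> uniq (v :: q) -> all [in S] (v :: q) ->
    exists2 v, v \in S & deg S v <= 1.
  by move/(_ x [::]); apply=> //=; rewrite andbT.
move=> v q; have [n] := ubnP (#|` S| - size q); elim: n v q => // n IH v q szq pq uq Sq.
have [/hasP[w] | /hasPn ext] := boolP (has [predD [in S] & v :: q] (nbrs v)); last first.
  exists v; first by case/andP: Sq.
  apply: acyclic_path_end acS pq uq Sq _ => w wS; rewrite adjE => /ext /=.
  by rewrite wS andbT negbK.
rewrite -adjE /= => avw /andP[wq wS].
have szw : size (v :: q) < #|` S|.
  apply: (uniq_leq_size (s1 := w :: v :: q)) => [|z]; first by rewrite /= wq.
  by rewrite inE => /predU1P[->|] //; apply/allP.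
apply: (IH w (v :: q)) => /=.
- by move: szq szw => /=; lia.
- by rewrite adj_sym avw.
- by rewrite wq.
- by rewrite wS.
Qed.

Lemma acyclic_ndarts S : acyclic S -> S != fset0 -> ndarts S [in S] + 2 <= (#|` S|).*2.
Proof.
move=> + Sn; have [n] := ubnP #|` S|; elim: n S Sn => // n IH S Sn szS acS.
have [v vS degv] := acyclic_leaf acS Sn.
have vS' : v \notin S `\ v by rewrite in_fsetD1 eqxx.
have deg' : deg (S `\ v) v <= 1.
  by apply: leq_trans degv; apply: sub_count => z; rewrite /= in_fsetD1 => /andP[].
rewrite -(fsetD1K vS) ndarts_in_fsetU1 // cardfsU1 vS' /=.
have [->|S'n] := eqVneq (S `\ v) fset0.
  rewrite ndartsE big_seq_fset0 cardfs0 /deg.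
  by rewrite (eq_count (a2 := pred0)) ?count_pred0 // => z; rewrite /= in_fset0.
have := IH (S `\ v) S'n _ (acyclic_sub acS (fsubD1set S v)).
move: szS deg'; rewrite (cardfsD1 v S) vS.
(* [lia] compares atoms syntactically, and the rewrites above left convertible but distinct
   copies of the same counts; [set] merges them. *)
by set c := #|` S `\ v|; set d := deg _ v; set a := ndarts _ _; lia.
Qed.

(* Each cell added to T next to T contributes at least two new inner darts. *)
Lemma ndarts_grow S T : polyomino S -> T `<=` S -> T != fset0 ->
  ndarts T [in T] + (#|` S|).*2 <= ndarts S [in S] + (#|` T|).*2.
Proof.
move=> [_ conn]; have [n] := ubnP (#|` S| - #|` T|).
elim: n T => // n IH T szT /fsubsetP TS /fset0Pn[t tT].
have [ST|/fset0Pn[y]] := eqVneq (S `\` T) fset0.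
  suff -> : T = S by [].
  by apply/eqP; rewrite eqEfsubset -[S `<=` T]fsetD_eq0 ST eqxx andbT; apply/fsubsetP.
rewrite in_fsetD => /andP[yT yS].
have [u [v [uT vT vS uv]]] := reach_exit (T := [in T]) (conn t y (TS t tT) yS) tT yT.
have deg1 : 0 < deg T v.
  by rewrite /deg -has_count; apply/hasP; exists u; rewrite // -adjE adj_sym.
have vTS : v |` T `<=` S by rewrite fsubUset fsub1set vS; exact/fsubsetP.
have vT0 : v |` T != fset0 by apply/fset0Pn; exists v; rewrite fset1U1.
have szvT : #|` S| - #|` v |` T| < n.
  by move: szT; have := fsubset_leq_card vTS; rewrite cardfsU1 vT /=; lia.
have := IH (v |` T) szvT vTS vT0; rewrite ndarts_in_fsetU1 // cardfsU1 vT /=.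
by move: deg1; set a := ndarts T _; set b := ndarts S _; set d := deg T v; lia.
Qed.

Lemma polyomino_ndarts S : polyomino S -> (#|` S|).*2 <= ndarts S [in S] + 2.
Proof.
move=> polS; have [/fset0Pn[r rS] _] := polS.
have r0 : [fset r] != fset0 by apply/fset0Pn; exists r; rewrite in_fset1.
have := ndarts_grow polS (T := [fset r]); rewrite fsub1set cardfs1 ndarts_fset1.
rewrite (eq_in_count (a2 := pred0)) ?count_pred0 => [/(_ rS r0)|z]; first by lia.
by rewrite /= in_fset1 -adjE; case: eqP => // ->; rewrite adj_irr.
Qed.

Lemma polyomino_ring_ndarts S R : polyomino S -> R `<=` S -> R != fset0 ->
  (forall v, v \in R -> 1 < deg R v) -> (#|` S|).*2 <= ndarts S [in S].
Proof.
move=> polS RS Rn deg2; have := ndarts_grow polS RS Rn.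
have : (#|` R|).*2 <= ndarts R [in R].
  have -> : (#|` R|).*2 = \sum_(v <- R) 2.
    by rewrite big_const_seq count_predT iter_addn_0 mul2n.
  by rewrite ndartsE big_seq [leqRHS]big_seq; apply: leq_sum => v; exact: deg2.
lia.
Qed.

(** * Holes *)

Lemma hole_notin S H z : is_hole S H -> z \in H -> z \notin S.
Proof. by case=> x _ [_ HH] /HH; exact: reach_last. Qed.

Lemma hole_closed S H z z' :
  is_hole S H -> z \in H -> adj z z' -> z' \notin S -> z' \in H.
Proof. by case=> x _ [_ HH] /HH xz azz' z'S; apply/HH; exact: reach_rcons xz azz' z'S. Qed.

Lemma hole_eq S H1 H2 z : is_hole S H1 -> is_hole S H2 -> z \in H1 -> z \in H2 -> H1 = H2.
Proof.
case=> x1 _ [_ HH1] [x2 _ [_ HH2]] /HH1 x1z /HH2 x2z; apply/fsetP => y.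
apply/idP/idP => [/HH1 x1y|/HH2 x2y]; [apply/HH2 | apply/HH1].
- exact: reach_trans x2z (reach_trans (reach_sym x1z) x1y).
- exact: reach_trans x1z (reach_trans (reach_sym x2z) x2y).
Qed.

Definition hole_union (s : seq {fset cell}) : {fset cell} := \bigcup_(H <- s) H.

Lemma disjoint_hole_union S H s : is_hole S H -> (forall H', H' \in s -> is_hole S H') ->
  H \notin s -> [disjoint H & hole_union s].
Proof.
move=> hH hs Hs; apply/fdisjointP => z zH; apply/bigfcupP => -[H' /andP[H's _] zH'].
by move: Hs; rewrite (hole_eq hH (hs _ H's) zH zH') H's.
Qed.

Lemma card_hole_union S s : uniq s -> (forall H, H \in s -> is_hole S H) ->
  size s <= #|` hole_union s|.
Proof.
elim: s => //= H s IH /andP[Hs us] hs; rewrite /hole_union big_cons.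
have hH := hs H (mem_head H s); have hs' H' H's := hs H' (mem_behead H's).
rewrite cardfsU_disjoint ?(disjoint_hole_union hH hs') // -add1n leq_add ?IH //.
by have [x xH _] := hH; rewrite cardfs_gt0; apply/fset0Pn; exists x.
Qed.

Lemma card_unit_hole_union (s : seq {fset cell}) :
  (forall H, H \in s -> #|` H| = 1) -> #|` hole_union s| <= size s.
Proof.
elim: s => [|H s IH] hs; first by rewrite /hole_union big_nil cardfs0.
rewrite /hole_union big_cons (leq_trans (leq_card_fsetU _ _).1) //= hs ?mem_head //.
by rewrite add1n ltnS IH // => H' H's; apply: hs; rewrite mem_behead.
Qed.

Lemma ndarts_hole S H : is_hole S H -> 4 <= ndarts S [in H].
Proof.
(* In each direction d, the d-most cell of H receives a dart from its d-neighbour. *)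
move=> hH; have [x xH _] := hH.
pose key (p : cell * cell) := (p.1.1 - p.2.1, p.1.2 - p.2.2)%R.
apply: (leq_size_count_key (key := key) (X := dirs)) => // d dD.
have [|z zH zmax] := fset_argmax (dot d) (H := H); first by apply/fset0Pn; exists x.
have zdH : shift z d \notin H.
  by apply/negP => /zmax; rewrite dot_shift //; lia.
have zdS : shift z d \in S.
  by apply: contraNT zdH => zdS; exact: hole_closed hH zH (adj_shift z dD) zdS.
exists (shift z d, z); first by rewrite mem_darts /= zdS adj_sym adj_shift.
by rewrite /= zH /key shift_diff eqxx.
Qed.

Lemma ndarts_hole_union S s : uniq s -> (forall H, H \in s -> is_hole S H) ->
  4 * size s <= ndarts S [in hole_union s].
Proof.
elim: s => //= H s IH /andP[Hs us] hs; rewrite /hole_union big_cons.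
have hH := hs H (mem_head H s); have hs' H' H's := hs H' (mem_behead H's).
by rewrite ndarts_fsetU ?(disjoint_hole_union hH hs') // mulnS leq_add ?ndarts_hole ?IH.
Qed.

Lemma outer_or_hole A s y : (forall H, H \in s <-> is_hole A H) -> y \notin A ->
  outer_cell A y \/ y \in hole_union s.
Proof.
(* A bounded component of the complement is cut out of a large enough box. *)
move=> hs yA; have [|bounded] := classic (outer_cell A y); [by left | right].
have [N yN] : exists N : nat, forall z, creach A y z -> (absz z.1 <= N) /\ (absz z.2 <= N).
  by apply: NNPP => unbounded; apply: bounded.
pose H := seq_fset tt
  [seq z <- box (- N%:Z) (2 * N).+1 (- N%:Z) (2 * N).+1 | asbool (creach A y z)].
have inH z : z \in H <-> creach A y z.
  rewrite seq_fsetE mem_filter; split => [/andP[/asboolP //] | yz].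
  rewrite (introT (asboolP _) yz) /=.
  by have := yN z yz; case: z {yz} => a b; rewrite mem_box !mem_irange /=; lia.
have yy : creach A y y by apply: reach_refl.
apply/bigfcupP; exists H; last exact/inH.
by rewrite andbT; apply/hs; exists y; [exact/inH | split => // z; exact: iff_sym (inH z)].
Qed.

Lemma ceil_2sqrtP m : 4 * m <= ceil_2sqrt m * ceil_2sqrt m.
Proof.
have hs : has (fun k => 4 * m <= k * k) (iota 0 (2 * m + 2)).
  by apply/hasP; exists (2 * m + 1); rewrite ?mem_iota //=; lia.
have := nth_find 0 hs; rewrite nth_iota ?add0n //.
by rewrite -[X in _ < X](size_iota 0 (2 * m + 2)) -has_find.
Qed.

Lemma ceil_2sqrt_min m k : 4 * m <= k * k -> ceil_2sqrt m <= k.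
Proof.
move=> mk; rewrite leqNgt; apply/negP => kc.
have ks : k < 2 * m + 2.
  by apply: leq_trans kc _; rewrite -[X in _ <= X](size_iota 0) find_size.
by have := before_find 0 kc; rewrite nth_iota // add0n mk.
Qed.

Lemma ceil_2sqrt_addn j t : 0 < j -> ceil_2sqrt (j + t) <= ceil_2sqrt j + t.
Proof. by move=> j0; apply: ceil_2sqrt_min; have := ceil_2sqrtP j; nia. Qed.

Lemma ceil_2sqrt_le_semiperimeter m a b : m <= a * b -> ceil_2sqrt m <= a + b.
Proof.
move=> mab; apply: ceil_2sqrt_min; apply: (leq_trans _ (nat_AGM2 a b).1).
by rewrite leq_mul2l mab orbT.
Qed.

(** * Efficiently structured polyominoes *)

Lemma efficiently_structured_bound A h : polyomino A -> num_holes A h ->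
  efficiently_structured A h -> #|` A| + 1 <= ceil_2sqrt (#|` A| + h) + h.*2.
Proof.
move=> [An _] [s [_ hs <-]] [acA unit [E [hE cardE]]].
have inner := acyclic_ndarts acA An.
have outer : ndarts A [predC A] <= count [in E] (darts A) + ndarts A [in hole_union s].
  apply: count_le_predU => -[x y]; rewrite mem_darts /= => /andP[xA xy] yA.
  by case: (outer_or_hole hs yA) => [yo | ->]; rewrite ?orbT //; apply/orP; left; apply/hE.
have outerE := count_mem_fset E (uniq_darts A).
have outerH : ndarts A [in hole_union s] <= 4 * size s.
  apply: leq_trans (ndarts_le _ _) _; rewrite leq_mul2l card_unit_hole_union ?orbT //.
  by move=> H /hs /unit.
have := ndarts_predC A [in A]; rewrite /ntiles in cardE.
move: inner outer outerE outerH.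
by set a := ndarts A _; set b := ndarts A _; set c := ndarts A _; lia.
Qed.

(** * Polyominoes with holes *)

Section Box.
Variables (x0 : int) (nx : nat) (y0 : int) (ny : nat).

Definition on_border (z : cell) : bool := [|| z.1 == x0, z.1 == (x0 + nx%:Z - 1)%R,
  z.2 == y0 | z.2 == (y0 + ny%:Z - 1)%R].

Lemma border_shift_out z : on_border z ->
  exists2 d, d \in dirs & shift z d \notin box x0 nx y0 ny.
Proof.
rewrite /on_border /dirs; case/or4P => /eqP E;
  [exists (-1, 0)%R | exists (1, 0)%R | exists (0, -1)%R | exists (0, 1)%R].
all: rewrite ?inE ?eqxx ?orbT // mem_box !mem_irange.
all: by move: E; case: z => a b /= ->; lia.
Qed.

Lemma border_deg z : 1 < nx -> 1 < ny -> z \in box x0 nx y0 ny -> on_border z ->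
  1 < count [pred w | (w \in box x0 nx y0 ny) && on_border w] (nbrs z).
Proof.
rewrite mem_box !mem_irange /on_border /nbrs /shift; case: z => a b /=.
rewrite !mem_box !mem_irange /=; lia.
Qed.

Definition lines (d : int * int) : seq int :=
  if d.1 == 0%R then irange x0 nx else irange y0 ny.

End Box.

Definition bounding_box (F : {fset cell}) x0 nx y0 ny : Prop :=
  {subset F <= box x0 nx y0 ny} /\
  [/\ exists2 z, z \in F & z.1 = x0, exists2 z, z \in F & z.1 = (x0 + nx%:Z - 1)%R,
      exists2 z, z \in F & z.2 = y0 & exists2 z, z \in F & z.2 = (y0 + ny%:Z - 1)%R].

Section FilledPolyomino.
Variables (B : {fset cell}) (s : seq {fset cell}).
Hypotheses (polB : polyomino B) (hs : forall H, H \in s -> is_hole B H).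

Let F := B `|` hole_union s.

Lemma filled_boundary z z' : z \in F -> adj z z' -> z' \notin F -> z \in B.
Proof.
rewrite in_fsetU => /orP[//|/bigfcupP[H /andP[Hs _] zH]] zz'; apply: contraNT => _.
have [z'B|z'B] := boolP (z' \in B); first by rewrite in_fsetU z'B.
rewrite in_fsetU (negbTE z'B); apply/bigfcupP; exists H; rewrite ?Hs //.
exact: hole_closed (hs Hs) zH zz' z'B.
Qed.

Lemma disjoint_tiles_holes : [disjoint B & hole_union s].
Proof.
apply/fdisjointP => z zB; apply/bigfcupP => -[H /andP[Hs _] zH].
by move: zB; rewrite (negbTE (hole_notin (hs Hs) zH)).
Qed.

Lemma card_filled : uniq s -> #|` B| + size s <= #|` F|.
Proof.
move=> us; rewrite cardfsU_disjoint ?disjoint_tiles_holes //.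
by rewrite leq_add2l (card_hole_union us hs).
Qed.

Lemma ndarts_filled :
  ndarts B [in B] + ndarts B [predC F] + ndarts B [in hole_union s] = 4 * #|` B|.
Proof. by rewrite -(ndarts_predC B [in F]) ndarts_fsetU ?disjoint_tiles_holes // addnAC. Qed.

Variables (x0 : int) (nx : nat) (y0 : int) (ny : nat).
Hypothesis F_box : bounding_box F x0 nx y0 ny.

Let F_sub : {subset F <= box x0 nx y0 ny} := F_box.1.

Lemma border_in_B z : z \in F -> on_border x0 nx y0 ny z -> z \in B.
Proof.
move=> zF /border_shift_out[d dD zd]; apply: filled_boundary zF (adj_shift z dD) _.
by apply: contra zd; exact: F_sub.
Qed.

Lemma column_meets_B t : (x0 <= t < x0 + nx%:Z)%R -> exists2 z, z \in B & z.1 = t.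
Proof.
case: F_box.2 => [[a aF a1] [b bF b1] _ _] tx.
have aB : a \in B by apply: border_in_B; rewrite // /on_border a1 eqxx.
have bB : b \in B by apply: border_in_B; rewrite // /on_border b1 eqxx orbT.
by apply: polyomino_ivt polB adj_fst_le aB bB _; rewrite a1 b1; lia.
Qed.

Lemma row_meets_B t : (y0 <= t < y0 + ny%:Z)%R -> exists2 z, z \in B & z.2 = t.
Proof.
case: F_box.2 => [_ _ [a aF a2] [b bF b2]] ty.
have aB : a \in B by apply: border_in_B; rewrite // /on_border a2 eqxx !orbT.
have bB : b \in B by apply: border_in_B; rewrite // /on_border b2 eqxx !orbT.
by apply: polyomino_ivt polB adj_snd_le aB bB _; rewrite a2 b2; lia.
Qed.

Lemma line_meets_F d t : t \in lines x0 nx y0 ny d -> exists2 z, z \in F & line d z = t.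
Proof.
rewrite /lines /line; case: ifP => _; rewrite mem_irange.
  by case/column_meets_B => z zB <-; exists z; rewrite ?in_fsetU ?zB.
by case/row_meets_B => z zB <-; exists z; rewrite ?in_fsetU ?zB.
Qed.

Lemma ndarts_outside_filled : (nx + ny).*2 <= ndarts B [predC F].
Proof.
(* For each direction d and each column or row t parallel to d, the d-most cell of F on
   that line is a tile whose d-neighbour lies outside F. *)
pose X := [seq (d, t) | d <- dirs, t <- lines x0 nx y0 ny d].
have -> : (nx + ny).*2 = size X.
  by rewrite size_allpairs_dep /lines /= !size_map !size_iota; lia.
pose key (p : cell * cell) := let d := (p.2.1 - p.1.1, p.2.2 - p.1.2)%R in (d, line d p.1).
apply: (leq_size_count_key (key := key)).
  apply: allpairs_uniq_dep => // [d _|[d t] [d' t'] _ _ [-> ->] //].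
  by rewrite /lines; case: ifP => _; exact: uniq_irange.
move=> k /allpairsPdep[d [t [dD tl ->]]]; have [z0 z0F z0t] := line_meets_F tl.
pose G := [fset z in F | line d z == t].
have [|z] := fset_argmax (dot d) (H := G).
  by apply/fset0Pn; exists z0; rewrite in_fset_sep z0F z0t eqxx.
rewrite in_fset_sep => /andP[zF /eqP zt] zmax.
have zdF : shift z d \notin F.
  apply/negP => zdF; have /zmax : shift z d \in G.
    by rewrite in_fset_sep zdF line_shift // zt eqxx.
  by rewrite dot_shift //; lia.
exists (z, shift z d).
  by rewrite mem_darts /= (filled_boundary zF (adj_shift z dD)) ?adj_shift.
by rewrite /= zdF /key /= shift_diff zt eqxx.
Qed.

Lemma card_filled_box : #|` F| <= nx * ny.
Proof.
by rewrite -(size_box x0 nx y0 ny); apply: uniq_leq_size (fset_uniq F) _ => z /F_sub.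
Qed.

Lemma full_filled_box : nx * ny <= #|` F| -> {subset box x0 nx y0 ny <= F}.
Proof.
move=> full; have [|_ eqFb] := uniq_min_size (fset_uniq F) F_sub; first by rewrite size_box.
by move=> z; rewrite -eqFb.
Qed.

Lemma filled_box_wide : 0 < size s -> 1 < nx /\ 1 < ny.
Proof.
move=> s0; have [H Hs] : exists H, H \in s.
  by case: (s) s0 => // H t _; exists H; rewrite mem_head.
have [x xH _] := hs Hs.
have nbrF d : d \in dirs -> shift x d \in box x0 nx y0 ny.
  move=> dD; apply: F_sub; rewrite in_fsetU; case: (boolP (shift x d \in B)) => //= xdB.
  apply/bigfcupP; exists H; rewrite ?Hs //.
  exact: hole_closed (hs Hs) xH (adj_shift x dD) xdB.
move: (nbrF (1, 0)%R isT) (nbrF (-1, 0)%R isT) (nbrF (0, 1)%R isT) (nbrF (0, -1)%R isT).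
by rewrite !mem_box !mem_irange /shift; case: x {xH nbrF} => a b /=; lia.
Qed.

Lemma full_filled_ndarts : 0 < size s -> nx * ny <= #|` F| -> (#|` B|).*2 <= ndarts B [in B].
Proof.
(* The border of the box then consists of tiles and forms a ring. *)
move=> s0 /full_filled_box full; have [wx wy] := filled_box_wide s0.
pose R := [fset z in B | on_border x0 nx y0 ny z].
have inR z : z \in box x0 nx y0 ny -> on_border x0 nx y0 ny z -> z \in R.
  by move=> zb zr; rewrite in_fset_sep zr andbT border_in_B ?full.
apply: (polyomino_ring_ndarts polB (R := R)).
- by apply/fsubsetP => z; rewrite in_fset_sep => /andP[].
- apply/fset0Pn; exists (x0, y0); apply: inR; last by rewrite /on_border eqxx.
  by rewrite mem_box !mem_irange /=; lia.
move=> v; rewrite in_fset_sep => /andP[vB vr]; apply: leq_trans (border_deg wx wy _ vr) _.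
  by apply: F_sub; rewrite in_fsetU vB.
by apply: sub_count => w /andP[wb wr]; exact: inR.
Qed.

End FilledPolyomino.

Lemma exists_bounding_box (F : {fset cell}) : F != fset0 ->
  exists x0 nx y0 ny, bounding_box F x0 nx y0 ny.
Proof.
move=> Fn.
have [l lF lm] := fset_argmax (fun z : cell => - z.1)%R Fn.
have [r rF rm] := fset_argmax (fun z : cell => z.1) Fn.
have [b bF bm] := fset_argmax (fun z : cell => - z.2)%R Fn.
have [t tF tm] := fset_argmax (fun z : cell => z.2) Fn.
have [lr bt] : (l.1 <= r.1)%R /\ (b.2 <= t.2)%R by move: (rm l lF) (tm b bF) => /=; lia.
exists l.1, (absz (r.1 - l.1)).+1, b.2, (absz (t.2 - b.2)).+1; split.
  move=> z zF; rewrite mem_box !mem_irange.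
  move: (lm z zF) (rm z zF) (bm z zF) (tm z zF) => /=.
  by case: z {zF} => ? ? /=; lia.
by split; [exists l | exists r | exists b | exists t] => //; lia.
Qed.

Lemma polyomino_holes_bound B k : polyomino B -> num_holes B k -> 0 < k ->
  ceil_2sqrt (#|` B| + k).+1 + k.*2 <= #|` B| + 1.
Proof.
move=> polB [s [us hs' <-]] k0; have hs H : H \in s -> is_hole B H by move/hs'.
have [|x0 [nx [y0 [ny F_box]]]] := exists_bounding_box (F := B `|` hole_union s).
  by case: polB => /fset0Pn[z zB] _; apply/fset0Pn; exists z; rewrite in_fsetU zB.
have total := ndarts_filled hs.
have outer := ndarts_outside_filled polB hs F_box.
have holes := ndarts_hole_union us hs.
have area := card_filled hs us.
have [full | not_full] := leqP (nx * ny) #|` B `|` hole_union s|.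
  have inner := full_filled_ndarts polB hs F_box k0 full.
  have := ceil_2sqrt_le_semiperimeter (leq_trans area (card_filled_box F_box)).
  have := @ceil_2sqrt_addn (#|` B| + size s) 1 (leq_trans k0 (leq_addl _ _)).
  move: inner outer holes total; set e := ndarts B _; set o := ndarts B _; set d := ndarts B _.
  by rewrite !addn1; set b := #|` B|; set n := size s; lia.
have inner := polyomino_ndarts polB.
have := ceil_2sqrt_le_semiperimeter (leq_ltn_trans area not_full).
move: inner outer holes total; set e := ndarts B _; set o := ndarts B _; set d := ndarts B _.
by rewrite addn1; set b := #|` B|; set n := size s; lia.
Qed.

Theorem theorem4 (A : {fset cell}) (h : nat) :
  polyomino A -> num_holes A h -> (1 <= h)%N ->
  efficiently_structured A h -> crystallized A h.
Proof.
move=> polA numA h1 effA B polB numB; rewrite /ntiles leqNgt; apply/negP => ltBA.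
have boundA := efficiently_structured_bound polA numA effA.
have boundB := polyomino_holes_bound polB numB h1.
have := @ceil_2sqrt_addn (#|` B| + h).+1 (#|` A| - #|` B|).-1 isT.
have -> : (#|` B| + h).+1 + (#|` A| - #|` B|).-1 = #|` A| + h by lia.
lia.
Qed.
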